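(* The operad morphism $\gamma:\operatorname{Arb}\to\operatorname{Zinb}$ is injective (i.e. $\gamma:\operatorname{Arb}(I)\to\operatorname{Zinb}(I)$ is injective for every finite set $I$), and so is the composite morphism $\kappa=\iota\circ\gamma:\operatorname{Arb}\to\operatorname{Mould}$.
   Context: A shrub $P$ on a finite set $I$ is a set $E$ of edges (unordered pairs of distinct elements of $I$) with a height function $h_P:I\to\mathbb{N}$; $j$ covers $i$ if $\{i,j\}\in E$ and $h_P(j)=h_P(i)+1$. Axioms: (1) edges join vertices whose heights differ by $1$; (2) every vertex of positive height covers some vertex; (3) no four distinct $a,b,c,d$ with $a$ covering $b$ and $c$, $c$ covering $d$, $\{b,d\}\notin E$; (4) no five distinct $a,b,c,d,e$ with $a$ covering $c,d$, $b$ covering $d,e$, $\{a,e\}\notin E$, $\{b,c\}\notin E$. $\operatorname{Arb}(I)$ is the set of shrubs on $I$; it is a set-theoretic operad with composition $P\circ_i P'$ = the shrub on $(I\setminus\{i\})\sqcup I'$ with height $h_P$ on $I\setminus\{i\}$, $h_{P'}+h_P(i)$ on $I'$, and edges those of $P$ not containing $i$, those of $P'$, and all $\{j,k\}$ with $j$ adjacent to $i$ in $P$ and $k$ of height $0$ in $P'$. $\operatorname{Zinb}(I)$ is the $\mathbb{Q}$-vector space with basis the total orders on $I$, with the Zinbiel operad structure (composition $\pi\circ_i\sigma$ = sum of the total orders extending $\preceq$, where $a\preceq b$ iff ($a,b\in I$, $a\le_\pi b$) or ($a,b\in I'$, $a\le_\sigma b$) or ($a\in I$, $b\in I'$, $a\le_\pi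 i$)). $\gamma:\operatorname{Arb}\to\operatorname{Zinb}$ is the operad morphism sending a shrub $P$ to the sum of all total orders $<$ on $I$ compatible with $P$, i.e. such that every vertex $i$ of positive height covers some $j$ with $j<i$. $\operatorname{Mould}(I)=\mathbb{Q}(u_i:i\in I)$ with $f\circ_i g=(\sum_{j\in J}u_j)\,g\,f|_{u_i=\sum_{j\in J}u_j}$, and $\iota:\operatorname{Zinb}\to\operatorname{Mould}$ is the (linear, injective) operad morphism sending a total order $\pi$ on $I$ to $1/\prod_{i\in I}\sum_{j\ge_\pi i}u_j$. *)

From HB Require Import structures.
From mathcomp Require Import all_boot all_order all_algebra.
From mathcomp Require Import fraction.
From mathcomp Require Import mpoly.
Set Implicit Arguments. Unset Strict Implicit. Unset Printing Implicit Defensive.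
Import Order.TTheory GRing.Theory Num.Theory.
Local Open Scope ring_scope.

Section Shrubs.
Variable I : finType.

(* A shrub datum: a set E of edges (unordered pairs, i.e. 2-element subsets
   of I) together with a height function h : I -> nat. *)
Definition shrub_data := ({set {set I}} * {ffun I -> nat})%type.

Definition edges (P : shrub_data) : {set {set I}} := P.1.
Definition height (P : shrub_data) : I -> nat := P.2.

Definition adj (P : shrub_data) (i j : I) : bool := [set i; j] \in edges P.

Definition covers (P : shrub_data) (j i : I) : bool :=
  adj P i j && (height P j == (height P i).+1)%N.

Definition is_shrub (P : shrub_data) : Prop :=
  (forall e, e \in edges P -> exists a b, a != b /\ e = [set a; b]) /\
  (forall a b, a != b -> adj P a b ->
      height P a = (height P b).+1 \/ height P b = (height P a).+1) /\
  (forall i, (0 < height P i)%N -> exists j, covers P i j) /\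
  (~ exists a b c d, uniq [:: a; b; c; d] /\
       covers P a b /\ covers P a c /\ covers P c d /\ ~~ adj P b d) /\
  (~ exists a b c d e, uniq [:: a; b; c; d; e] /\
       covers P a c /\ covers P a d /\ covers P b d /\ covers P b e /\
       ~~ adj P a e /\ ~~ adj P b c).

(* Binary relations on I, encoded as finite functions: r i j means i <= j. *)
Definition relI := {ffun I -> {ffun I -> bool}}.

Definition is_total_order (r : relI) : bool :=
  [forall i, r i i] &&
  [forall i, forall j, r i j && r j i ==> (i == j)] &&
  [forall i, forall j, forall k, r i j && r j k ==> r i k] &&
  [forall i, forall j, r i j || r j i].

Definition compatible (P : shrub_data) (r : relI) : bool :=
  [forall i, (0 < height P i)%N ==>
     [exists j, covers P i j && r j i && (j != i)]].

(* Zinb(I): Q-vector space with basis the total orders on I; elements are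
   rational coefficient functions on relations supported on total orders. *)
Definition Zinb := {ffun relI -> rat}.

Definition zbasis (r : relI) : Zinb := [ffun s => (s == r)%:R].

Definition gamma (P : shrub_data) : Zinb :=
  \sum_(r | is_total_order r && compatible P r) zbasis r.

Definition Mould := {fraction {mpoly rat[#|I|]}}.

Definition u (i : I) : Mould := tofrac ('X_(enum_rank i) : {mpoly rat[#|I|]}).

Definition iota_basis (r : relI) : Mould :=
  (\prod_i \sum_(j | r i j) u j)^-1.

Definition iota (z : Zinb) : Mould :=
  \sum_(r | is_total_order r) (ratr (z r) : Mould) * iota_basis r.

Definition kappa (P : shrub_data) : Mould := iota (gamma P).

End Shrubs.

From HB Require Import structures.
From mathcomp Require Import all_boot all_order all_algebra.
From mathcomp Require Import fraction.
From mathcomp Require Import mpoly.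
From mathcomp Require Import zify.
Set Implicit Arguments. Unset Strict Implicit. Unset Printing Implicit Defensive.
Import Order.TTheory GRing.Theory Num.Theory.

(* gamma P records exactly the total orders compatible with P, and these
   determine P: the order by height in which a given
   vertex i comes first in its level is compatible with P, and by induction on
   the height it bounds the height of i in any shrub with the same compatible
   orders; moving b to just after a, for an edge of P from a up to b, then
   forces the edge {a, b}.
   For kappa it remains to see that the rational functions
   1 / prod_i sigma(up-set of i), sigma(U) = sum_(j in U) u_j, attached to the
   total orders are linearly independent.  Multiplying by the product of all
   sigma(U), U nonempty, turns them into the polynomials N(K), the product of
   sigma(U) over the nonempty U outside the chain K of up-sets.  Setting u_l = 0
   kills N(K) unless [set l] is in K, and otherwise sends it, up to a nonzero
   factor, to the same product for I minus l and the chain K with l deleted;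
   this gives independence by induction on #|I|. *)

Section TotalOrders.
Variable I : finType.
Implicit Types (r : relI I) (k : I -> nat).

Lemma total_orderP r : is_total_order r ->
  [/\ forall i, r i i, forall i j, r i j -> r j i -> i = j,
      forall i j m, r i j -> r j m -> r i m & forall i j, r i j || r j i].
Proof.
case/andP=> /andP[/andP[/forallP refl /forallP anti] /forallP trans] /forallP tot.
split=> [i | i j rij rji | i j m rij rjm | i j].
- exact: refl.
- by apply/eqP; move/forallP/(_ j)/implyP: (anti i); apply; rewrite rij.
- by move/forallP/(_ j)/forallP/(_ m)/implyP: (trans i); apply; rewrite rij.
- exact: (forallP (tot i)).
Qed.

Definition key_order k : relI I :=
  [ffun i => [ffun j => (k i < k j)%N ||
      ((k i == k j) && (enum_rank i <= enum_rank j)%N)]].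

Lemma key_order_total k : is_total_order (key_order k).
Proof.
apply/andP; split; [apply/andP; split; [apply/andP; split|]|].
- by apply/forallP => i; rewrite !ffunE eqxx leqnn orbT.
- apply/forallP => i; apply/forallP => j; apply/implyP; rewrite !ffunE => le_ij.
  by apply/eqP/enum_rank_inj/ord_inj; case/andP: le_ij; lia.
- by do 3![apply/forallP => ?]; apply/implyP; rewrite !ffunE; case/andP; lia.
- by do 2![apply/forallP => ?]; rewrite !ffunE; lia.
Qed.

Lemma key_order_lt k i j : (k i < k j)%N -> key_order k i j && (i != j).
Proof.
move=> lt_ij; rewrite !ffunE lt_ij; apply/eqP=> eq_ij.
by rewrite eq_ij ltnn in lt_ij.
Qed.

Lemma key_order_le k i j : key_order k i j -> (k i <= k j)%N.
Proof. by rewrite !ffunE; lia. Qed.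

Lemma key_order_compatible (P : shrub_data I) k :
  (forall i, (0 < height P i)%N -> exists2 j, covers P i j & (k j < k i)%N) ->
  compatible P (key_order k).
Proof.
move=> down; apply/forall_inP => i /down [j cij lt_ji]; apply/existsP; exists j.
by rewrite cij; have /andP[-> ->] := key_order_lt lt_ji.
Qed.

End TotalOrders.

Section GammaInjective.
Variable I : finType.
Implicit Types P : shrub_data I.

Lemma gammaE P r :
  gamma P r = ((is_total_order r && compatible P r) : nat)%:R%R.
Proof.
rewrite /gamma sum_ffunE.
case: (boolP (is_total_order r && compatible P r)) => Pr.
  rewrite (bigD1 r) //= ffunE eqxx big1 ?addr0 // => s /andP[_ nsr].
  by rewrite ffunE eq_sym (negbTE nsr).
rewrite big1 // => s Ps; rewrite ffunE; case: eqP => // esr.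
by rewrite esr Ps in Pr.
Qed.

Lemma compatibleP P r i : compatible P r -> (0 < height P i)%N ->
  exists j, [/\ covers P i j, r j i & j != i].
Proof.
move/forall_inP => cP /cP /existsP [j /andP[/andP[cij rji] nji]].
by exists j.
Qed.

Lemma adjC P i j : adj P i j = adj P j i.
Proof. by rewrite /adj setUC. Qed.

Section Compatible.
Variables P1 P2 : shrub_data I.
Hypothesis cover1 : forall i, (0 < height P1 i)%N -> exists j, covers P1 i j.
Hypothesis compatible12 :
  forall r, is_total_order r -> compatible P1 r -> compatible P2 r.

Lemma height_le_of_compatible i : (height P2 i <= height P1 i)%N.
Proof.
have [n] := ubnP (height P1 i); elim: n i => // n IH i /ltnSE le_in.
(* [i] comes first among the vertices of its P1-height *)
pose k y := if y == i then (2 * height P1 i)%N else (2 * height P1 y).+1.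
have C1 : compatible P1 (key_order k).
  apply: key_order_compatible => y /cover1 [z cyz]; exists z => //.
  move: cyz => /andP[_ /eqP]; rewrite /k.
  by case: (eqVneq y i) => [->|_]; case: (eqVneq z i) => [->|_]; lia.
case: (posnP (height P2 i)) => [-> //|pos_i].
have [j [/andP[_ /eqP h2i] rji nji]] :=
  compatibleP (compatible12 (key_order_total k) C1) pos_i.
have := key_order_le rji; rewrite /k eqxx (negbTE nji) => lt_ji.
have := IH j (leq_trans _ le_in); rewrite h2i; lia.
Qed.

Lemma adj_of_compatible : height P2 =1 height P1 ->
  forall a b, adj P1 a b -> height P1 b = (height P1 a).+1 -> adj P2 a b.
Proof.
move=> eq_h a b ab hb.
have nba : b != a by apply/eqP => eba; move: hb; rewrite eba; lia.
(* the order by height, except that [b] is moved to just after [a], which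
   comes first in its level *)
pose k y := if y == a then (3 * height P1 a).+1 else
            if y == b then (3 * height P1 a).+2 else (3 * height P1 y).+3.
have C1 : compatible P1 (key_order k).
  apply: key_order_compatible => y pos_y.
  case: (eqVneq y b) => [->|nyb].
    exists a; first by rewrite /covers ab hb eqxx.
    by rewrite /k (negbTE nba) !eqxx; lia.
  have [z cyz] := cover1 pos_y; exists z => //.
  move: cyz => /andP[_ /eqP]; rewrite /k (negbTE nyb).
  by case: (eqVneq y a) => [eya|_]; case: (eqVneq z a) => [eza|_];
    case: (eqVneq z b) => [ezb|_]; subst; rewrite ?eqxx //=; lia.
have pos_b : (0 < height P2 b)%N by rewrite eq_h hb.
have [j [/andP[aj /eqP h2b] rjb njb]] :=
  compatibleP (compatible12 (key_order_total k) C1) pos_b.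
case: (eqVneq j a) => [<- //|nja].
have := key_order_le rjb; rewrite /k (negbTE nja) (negbTE njb) eqxx (negbTE nba).
by move: h2b; rewrite !eq_h hb; lia.
Qed.

End Compatible.

Lemma edges_sub_of_compatible P1 P2 : is_shrub P1 ->
  (forall r, is_total_order r -> compatible P1 r -> compatible P2 r) ->
  height P2 =1 height P1 -> edges P1 \subset edges P2.
Proof.
move=> [pairs1 [grad1 [cover1 _]]] compatible12 eq_h; apply/subsetP => e e1.
have [a [b [nab eab]]] := pairs1 e e1.
have ab : adj P1 a b by rewrite /adj -eab.
rewrite eab; change (adj P2 a b).
case: (grad1 a b nab ab) => hab.
  by rewrite adjC; apply: (adj_of_compatible cover1) => //; rewrite adjC.
exact: (adj_of_compatible cover1).
Qed.

Lemma shrub_eq_of_compatible P1 P2 : is_shrub P1 -> is_shrub P2 ->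
  (forall r, is_total_order r -> compatible P1 r = compatible P2 r) -> P1 = P2.
Proof.
move=> S1 S2 eq_c.
have c12 r : is_total_order r -> compatible P1 r -> compatible P2 r by move/eq_c ->.
have c21 r : is_total_order r -> compatible P2 r -> compatible P1 r by move/eq_c ->.
have [[_ [_ [cover1 _]]] [_ [_ [cover2 _]]]] := (S1, S2).
have eq_h : height P2 =1 height P1.
  by move=> i; apply/eqP; rewrite eqn_leq !height_le_of_compatible.
rewrite [P1]surjective_pairing [P2]surjective_pairing; congr pair.
  by apply/eqP; rewrite eqEsubset !edges_sub_of_compatible // => i; rewrite eq_h.
by apply/ffunP => i; rewrite -[_ i]/(height P1 i) -eq_h.
Qed.

Lemma gamma_inj P1 P2 :
  is_shrub P1 -> is_shrub P2 -> gamma P1 = gamma P2 -> P1 = P2.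
Proof.
move=> S1 S2 eq_g; apply: shrub_eq_of_compatible => // r tr.
have /eqP := congr1 (fun z : Zinb I => z r) eq_g.
by rewrite !gammaE tr eqr_nat; do 2!case: compatible.
Qed.

End GammaInjective.

Section CompleteChains.
Variable T : finType.
Implicit Types (S U V : {set T}) (K : {set {set T}}) (l : T).

Definition complete_chain S K : Prop :=
  [/\ forall U, U \in K -> U \subset S /\ U != set0,
      {in K &, forall U V, (U \subset V) || (V \subset U)} & #|K| = #|S|].

Lemma chain_set1_mem S K l U :
  complete_chain S K -> [set l] \in K -> U \in K -> l \in U.
Proof.
case=> sub_S chain_K _ Kl KU.
case/orP: (chain_K _ _ Kl KU); first by rewrite sub1set.
by rewrite subset1 (negbTE (sub_S U KU).2) orbF => /eqP ->; apply: set11.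
Qed.

Lemma complete_chain_set1 S K : complete_chain S K -> S != set0 ->
  exists l, [set l] \in K.
Proof.
case=> sub_S chain_K card_K nS.
pose s := [seq #|U| | U <- enum K].
have uniq_s : uniq s.
  rewrite map_inj_in_uniq ?enum_uniq // => U V; rewrite !mem_enum => KU KV eqUV.
  case/orP: (chain_K _ _ KU KV) => sub; apply/eqP; last rewrite eq_sym;
    by rewrite eqEcard sub eqUV leqnn.
have s_sub : {subset s <= iota 1 #|S|}.
  move=> m /mapP [U]; rewrite mem_enum => /sub_S[sUS nU] ->.
  by rewrite mem_iota card_gt0 nU add1n ltnS subset_leq_card.
have size_s : size (iota 1 #|S|) <= size s.
  by rewrite size_iota size_map -cardE card_K.
have [_ s_eq] := uniq_min_size uniq_s s_sub size_s.
have : 1%N \in s by rewrite s_eq mem_iota leqnn add1n ltnS card_gt0.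
case/mapP => U; rewrite mem_enum => KU /esym/eqP/cards1P [l Ul].
by exists l; rewrite -Ul.
Qed.

Definition chain_del l K : {set {set T}} := [set U :\ l | U in K :\ [set l]].

Lemma setD1_inj l U V : l \in U -> l \in V -> U :\ l = V :\ l -> U = V.
Proof. by move=> lU lV eqUV; rewrite -(setD1K lU) -(setD1K lV) eqUV. Qed.

Lemma setD1_eq0 l U : l \in U -> (U :\ l == set0) = (U == [set l]).
Proof.
move=> lU; rewrite setD_eq0 subset1; case: eqP => //= _.
by apply/eqP => U0; rewrite U0 inE in lU.
Qed.

Lemma mem_chain_del S K l U : complete_chain S K -> [set l] \in K ->
  (U \in K) = (l \in U) && ((U == [set l]) || (U :\ l \in chain_del l K)).
Proof.
move=> cK Kl; apply/idP/idP => [KU|].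
  rewrite (chain_set1_mem cK Kl KU) /=; case: eqP => //= /eqP nUl.
  by apply/imsetP; exists U; rewrite // !inE nUl.
case/andP=> lU /orP[/eqP -> //|/imsetP [V]].
rewrite !inE => /andP[_ KV] eqUV.
by rewrite (setD1_inj lU (chain_set1_mem cK Kl KV) eqUV).
Qed.

Lemma chain_del_inj S K1 K2 l : complete_chain S K1 -> complete_chain S K2 ->
  [set l] \in K1 -> [set l] \in K2 -> chain_del l K1 = chain_del l K2 -> K1 = K2.
Proof.
move=> cK1 cK2 K1l K2l eqK; apply/setP => U.
by rewrite (mem_chain_del _ cK1 K1l) (mem_chain_del _ cK2 K2l) eqK.
Qed.

Lemma chain_del_complete S K l : complete_chain S K -> [set l] \in K ->
  complete_chain (S :\ l) (chain_del l K).
Proof.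
move=> cK Kl; have [sub_S chain_K card_K] := cK.
have lS : l \in S by rewrite -sub1set; apply: (sub_S _ Kl).1.
split.
- move=> W /imsetP [U]; rewrite !inE => /andP[nUl KU] ->.
  have [sUS _] := sub_S U KU.
  by rewrite setSD // setD1_eq0 // (chain_set1_mem cK Kl KU).
- move=> W1 W2 /imsetP [U]; rewrite !inE => /andP[_ KU] ->.
  move=> /imsetP [V]; rewrite !inE => /andP[_ KV] ->.
  by case/orP: (chain_K _ _ KU KV) => sub; rewrite (setSD _ sub) ?orbT.
- rewrite card_in_imset; last first.
    move=> U V; rewrite !inE => /andP[_ KU] /andP[_ KV].
    exact: setD1_inj (chain_set1_mem cK Kl KU) (chain_set1_mem cK Kl KV).
  have := cardsD1 [set l] K; have := cardsD1 l S.
  by rewrite Kl lS card_K => -> /addnI ->.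
Qed.

End CompleteChains.

Local Open Scope ring_scope.

Section PsumProducts.
Variables (T : finType) (R : idomainType) (x : T -> R).
Implicit Types (S U V : {set T}) (K : {set {set T}}) (l : T).

Definition psum U := \sum_(j in U) x j.
Definition psum_prod S := \prod_(U : {set T} | (U \subset S) && (U != set0)) psum U.
Definition psum_prod_out S K :=
  \prod_(U : {set T} | (U \subset S) && (U != set0) && (U \notin K)) psum U.

Section Specialize.
Variables (phi : {rmorphism R -> R}) (l : T).
Hypothesis phi_l : phi (x l) = 0.
Hypothesis phi_id : forall j, j != l -> phi (x j) = x j.

Lemma phi_psum U : phi (psum U) = psum (U :\ l).
Proof.
rewrite rmorph_sum /psum (bigID (pred1 l)) /= big1 ?add0r => [|j /andP[_ /eqP->] //].
by apply: eq_big => [j|j /andP[_ nj]]; [rewrite !inE andbC | exact: phi_id].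
Qed.

Lemma phi_psum_prod_out_notin S K : l \in S -> [set l] \notin K ->
  phi (psum_prod_out S K) = 0.
Proof.
move=> lS nKl; rewrite rmorph_prod (bigD1 [set l]) /=; last first.
  by rewrite sub1set lS nKl andbT; apply/set0Pn; exists l; rewrite set11.
by rewrite phi_psum setDv /psum big_set0 mul0r.
Qed.

Lemma phi_psum_prod_out_in S K : complete_chain S K -> l \in S -> [set l] \in K ->
  phi (psum_prod_out S K) =
  psum_prod (S :\ l) * psum_prod_out (S :\ l) (chain_del l K).
Proof.
move=> cK lS Kl; rewrite rmorph_prod (bigID (fun U => l \in U)) /= mulrC.
congr (_ * _).
  apply: eq_big => [U|U /andP[_ nlU]]; last first.
    by rewrite phi_psum; congr psum; apply/setDidPl; rewrite disjoint_sym disjoints1.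
  case: (boolP (l \in U)) => lU /=; first by rewrite subsetD1 lU /= !andbF.
  have nKU : U \notin K by apply: contra lU; apply: chain_set1_mem cK Kl.
  by rewrite subsetD1 lU nKU !andbT.
rewrite (reindex_onto (fun V => l |: V) (fun U => U :\ l)) /=; last first.
  by move=> U /andP[_ lU]; rewrite setD1K.
apply: eq_big => [V|V /andP[_ /eqP eqV]]; last by rewrite phi_psum eqV.
case: (boolP (l \in V)) => lV.
  have -> : ((l |: V) :\ l == V) = false.
    by apply/negbTE/eqP => eqV; have := setD11 l (l |: V); rewrite eqV lV.
  by rewrite subsetD1 lV !andbF.
rewrite setU1K // eqxx andbT setU11 andbT subUset sub1set lS subsetD1 lV andbT.
have nV : l |: V != set0 by apply/set0Pn; exists l; apply: setU11.
rewrite nV (mem_chain_del _ cK Kl) setU11 -setD1_eq0 ?setU11 // setU1K //.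
by rewrite /= andbT negb_or andbA.
Qed.

Lemma phi_chain_sum (A : finType) S (D : {pred A}) (f : A -> {set {set T}})
    (c : A -> int) :
  {in D, forall a, complete_chain S (f a)} -> l \in S ->
  phi (\sum_(a in D) (c a)%:~R * psum_prod_out S (f a)) =
  psum_prod (S :\ l) * \sum_(a in D | [set l] \in f a)
    (c a)%:~R * psum_prod_out (S :\ l) (chain_del l (f a)).
Proof.
move=> chain_f lS; rewrite rmorph_sum (bigID (fun a => [set l] \in f a)) /=.
rewrite [X in _ + X]big1 ?addr0 => [|a /andP[_ nKl]]; last first.
  by rewrite rmorphM phi_psum_prod_out_notin ?mulr0.
rewrite mulr_sumr; apply: eq_bigr => a /andP[Da Kal].
by rewrite rmorphM rmorph_int (phi_psum_prod_out_in (chain_f a Da)) // mulrCA.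
Qed.

End Specialize.
End PsumProducts.

Section Freeness.
Variables (T : finType) (R : idomainType) (x : T -> R).
Hypothesis kill_var : forall l, exists phi : {rmorphism R -> R},
  phi (x l) = 0 /\ forall j, j != l -> phi (x j) = x j.
Hypothesis psum_neq0 : forall U : {set T}, U != set0 -> psum x U != 0.
Hypothesis int_char0 : forall z : int, z%:~R = 0 :> R -> z = 0.

Lemma psum_prod_neq0 S : psum_prod x S != 0.
Proof. by apply/prodf_neq0 => U /andP[_ /psum_neq0]. Qed.

Theorem psum_prod_out_free (A : finType) S (D : {pred A})
    (f : A -> {set {set T}}) (c : A -> int) :
  {in D, forall a, complete_chain S (f a)} -> {in D &, injective f} ->
  \sum_(a in D) (c a)%:~R * psum_prod_out x S (f a) = 0 ->
  {in D, forall a, c a = 0}.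
Proof.
have [n] := ubnP #|S|; elim: n S D f c => // n IH S D f c.
move=> lt_Sn chain_f inj_f sum0 a0 Da0.
case: (eqVneq S set0) => [S0|nS].
  have f0 a : a \in D -> f a = set0.
    by case/chain_f=> _ _; rewrite S0 cards0 => /eqP; rewrite cards_eq0 => /eqP.
  move: sum0; rewrite (bigD1 a0) //= big1 ?addr0 => [|a /andP[Da na0]]; last first.
    have eq_a : a = a0 by apply: inj_f; rewrite // !f0.
    by rewrite eq_a eqxx in na0.
  rewrite /psum_prod_out big_pred0 ?mulr1 => [/int_char0 //|U].
  by rewrite S0 subset0 andbN.
have [l Kl] := complete_chain_set1 (chain_f a0 Da0) nS.
have lS : l \in S.
  by have [sub_S _ _] := chain_f a0 Da0; rewrite -sub1set; apply: (sub_S _ Kl).1.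
have [phi [phi_l phi_id]] := kill_var l.
pose D' := [pred a in D | [set l] \in f a].
have /eqP := congr1 phi sum0.
rewrite (phi_chain_sum phi_l phi_id _ chain_f lS) rmorph0 mulf_eq0.
rewrite (negbTE (psum_prod_neq0 _)) /= => /eqP sum0'.
apply: (IH (S :\ l) D' (chain_del l \o f) c _ _ _ sum0' a0).
- by move: lt_Sn; rewrite (cardsD1 l S) lS.
- by move=> a /andP[Da Kal]; apply: chain_del_complete (chain_f a Da) Kal.
- move=> a b /andP[Da Kal] /andP[Db Kbl] /= eq_del; apply: inj_f => //.
  exact: chain_del_inj (chain_f a Da) (chain_f b Db) Kal Kbl eq_del.
- by rewrite inE Da0 Kl.
Qed.

End Freeness.

Section KappaInjective.
Variable I : finType.
Local Notation Rp := {mpoly rat[#|I|]}.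
Implicit Types (P : shrub_data I) (r : relI I).

Definition uX (j : I) : Rp := 'X_(enum_rank j).

Lemma uX_kill l : exists phi : {rmorphism Rp -> Rp},
  phi (uX l) = 0 /\ forall j, j != l -> phi (uX j) = uX j.
Proof.
pose lq := [tuple if i == enum_rank l then 0 else 'X_i : Rp | i < #|I|].
exists (comp_mpoly lq); split => [|j njl];
  rewrite /uX /= comp_mpolyXU -tnth_nth tnth_mktuple ?eqxx //.
by rewrite (inj_eq enum_rank_inj) (negbTE njl).
Qed.

Lemma meval1_psum_uX U : meval (fun=> 1) (psum uX U) = #|U|%:R.
Proof.
rewrite /psum /uX rmorph_sum; under eq_bigr do rewrite /= mevalXU.
by rewrite sumr_const.
Qed.

Lemma psum_uX_neq0 U : U != set0 -> psum uX U != 0.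
Proof.
apply: contra_neq => U0; have := congr1 (meval (fun=> 1)) U0.
by rewrite meval1_psum_uX rmorph0 => /eqP; rewrite pnatr_eq0 cards_eq0 => /eqP.
Qed.

Lemma intr_mpoly_eq0 (z : int) : z%:~R = 0 :> Rp -> z = 0.
Proof.
move=> z0; have := congr1 (meval (fun=> 1 : rat)) z0.
by rewrite rmorph0 rmorph_int => /eqP; rewrite intr_eq0 => /eqP.
Qed.

Definition up_set r i : {set I} := [set j | r i j].
Definition up_chain r : {set {set I}} := [set up_set r i | i : I].

Lemma up_set_inj r : is_total_order r -> injective (up_set r).
Proof.
case/total_orderP=> refl anti _ _ i j eq_ij.
have /setP/(_ i) := eq_ij; have /setP/(_ j) := eq_ij; rewrite !inE !refl.
by move=> rij /esym rji; apply: anti.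
Qed.

Lemma up_chain_complete r : is_total_order r -> complete_chain setT (up_chain r).
Proof.
move=> tr; have [refl _ trans tot] := total_orderP tr.
split.
- move=> _ /imsetP [i _ ->]; rewrite subsetT; split=> //.
  by apply/set0Pn; exists i; rewrite inE refl.
- move=> _ _ /imsetP [i _ ->] /imsetP [j _ ->].
  by case/orP: (tot i j) => [rij|rji]; apply/orP; [right|left];
    apply/subsetP => k; rewrite !inE; apply: trans.
- by rewrite card_imset ?cardsT //; apply: up_set_inj.
Qed.

Lemma up_chainP r : is_total_order r -> forall i j,
  r i j = [forall U in up_chain r, (i \in U) ==> (j \in U)].
Proof.
move=> tr i j; have [refl _ trans _] := total_orderP tr; apply/idP/forall_inP.
  by move=> rij _ /imsetP [k _ ->]; rewrite !inE; apply/implyP => /trans; apply.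
have up_i : up_set r i \in up_chain r by apply/imsetP; exists i.
by move/(_ _ up_i); rewrite !inE refl.
Qed.

Lemma up_chain_inj r1 r2 : is_total_order r1 -> is_total_order r2 ->
  up_chain r1 = up_chain r2 -> r1 = r2.
Proof.
move=> tr1 tr2 eq_c; apply/ffunP => i; apply/ffunP => j.
by rewrite (up_chainP tr1) (up_chainP tr2) eq_c.
Qed.

Definition up_prod r : Rp := \prod_i psum uX (up_set r i).

Lemma up_prod_neq0 r : is_total_order r -> up_prod r != 0.
Proof.
case/total_orderP=> refl _ _ _; apply/prodf_neq0 => i _.
by apply: psum_uX_neq0; apply/set0Pn; exists i; rewrite inE refl.
Qed.

Lemma psum_prod_up_chain r : is_total_order r ->
  psum_prod uX setT = up_prod r * psum_prod_out uX setT (up_chain r).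
Proof.
move=> tr; have [chain_sub _ _] := up_chain_complete tr.
rewrite /psum_prod /psum_prod_out (bigID (mem (up_chain r))) /=; congr (_ * _).
rewrite /up_prod -(big_imset _ (in2W (up_set_inj tr))) /=.
apply: eq_bigl => U; rewrite -/(up_chain r) subsetT andbC.
by case: (boolP (U \in _)) => //= cU; apply: (chain_sub U cU).2.
Qed.

Lemma iota_basisE r : iota_basis r = (tofrac (up_prod r))^-1.
Proof.
rewrite /iota_basis /up_prod rmorph_prod; congr (_^-1); apply: eq_bigr => i _.
by rewrite /psum rmorph_sum; apply: eq_bigl => j; rewrite inE.
Qed.

Lemma psum_prod_mul_iota_basis r : is_total_order r ->
  tofrac (psum_prod uX setT) * iota_basis r =
  tofrac (psum_prod_out uX setT (up_chain r)).
Proof.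
move=> tr; rewrite iota_basisE (psum_prod_up_chain tr) rmorphM mulrAC divff ?mul1r //.
by rewrite tofrac_eq0 up_prod_neq0.
Qed.

Lemma kappaE P : kappa P =
  \sum_(r | is_total_order r) (compatible P r)%:R * iota_basis r.
Proof. by apply: eq_bigr => r tr; rewrite gammaE tr ratr_nat. Qed.

Lemma kappa_compatible P1 P2 : kappa P1 = kappa P2 ->
  forall r, is_total_order r -> compatible P1 r = compatible P2 r.
Proof.
move=> eq_k r tr.
pose c s : int := (compatible P1 s)%:Z - (compatible P2 s)%:Z.
have sum0 : \sum_(s | is_total_order s)
    (c s)%:~R * psum_prod_out uX setT (up_chain s) = 0.
  apply/eqP; rewrite -tofrac_eq0; apply/eqP.
  transitivity (tofrac (psum_prod uX setT) * (kappa P1 - kappa P2)); last first.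
    by rewrite eq_k subrr mulr0.
  rewrite !kappaE -sumrB mulr_sumr rmorph_sum; apply: eq_bigr => s ts.
  rewrite rmorphM rmorph_int /= -psum_prod_mul_iota_basis // /c intrB -!pmulrn.
  by rewrite -mulrBl mulrCA.
have := psum_prod_out_free uX_kill psum_uX_neq0 intr_mpoly_eq0
  (D := [pred s | is_total_order s]) up_chain_complete up_chain_inj sum0 tr.
by move/eqP; rewrite subr_eq0; do 2!case: compatible.
Qed.

End KappaInjective.

Theorem mainTheorem15 (I : finType) :
  (forall P1 P2 : shrub_data I, is_shrub P1 -> is_shrub P2 ->
     gamma P1 = gamma P2 -> P1 = P2) /\
  (forall P1 P2 : shrub_data I, is_shrub P1 -> is_shrub P2 ->
     kappa P1 = kappa P2 -> P1 = P2).
Proof.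
split; first exact: gamma_inj.
move=> P1 P2 S1 S2 eq_k; apply: shrub_eq_of_compatible => //.
exact: kappa_compatible.
Qed.
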